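(* Let $\chi$ and $\eta$ be Dirichlet characters mod $N$ with $\chi$ primitive. Then $J_{\mathfrak J_2}(\chi,\eta)=N^4J(\chi,\chi,\eta)$.
   Context: $\mathfrak C_\mathbb Q$ is the (positive definite) Cayley octonion algebra with involution $x\mapsto\bar x$ and norm $N(x)=x\bar x$, and $\mathfrak o$ the order of integral Cayley numbers ($N|_\mathfrak o$ is a positive definite integral quadratic form of rank $8$ whose Gram matrix lies in $\frac12GL_8(\mathbb Z)$). $\mathfrak J_2(\mathbb Z)$ is the set of matrices $B=\begin{pmatrix}a&x\\ \bar x&b\end{pmatrix}$, $a,b\in\mathbb Z$, $x\in\mathfrak o$, with $\det B=ab-N(x)$, $\mathrm{Tr}(B)=a+b$, and $\mathfrak J_2(\mathbb Z/N\mathbb Z)=\mathfrak J_2(\mathbb Z)\otimes\mathbb Z/N\mathbb Z$. Dirichlet characters vanish on non-units mod $N$. $J_{\mathfrak J_2}(\chi_1,\chi_2)=\sum_{B\in\mathfrak J_2(\mathbb Z/N\mathbb Z)}\chi_1(\det B)\chi_2(1-\mathrm{Tr}(B))$ and $J(\chi_1,\chi_2,\chi_3)=\sum_{a_1+a_2+a_3=1,\ a_i\in\mathbb Z/N\mathbb Z}\chi_1(a_1)\chi_2(a_2)\chi_3(a_3)$. *)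

From mathcomp Require Import all_boot all_order all_algebra all_field.
Set Implicit Arguments. Unset Strict Implicit. Unset Printing Implicit Defensive.
Import Order.TTheory GRing.Theory Num.Theory.
Local Open Scope ring_scope.

(** * The Cayley octonion algebra C_Q (positive definite), coordinates
    w.r.t. the standard basis e_0 = 1, e_1, ..., e_7, with the Fano-plane
    multiplication rule  e_i e_{i+1} = e_{i+3}  (indices 1..7 taken mod 7). *)

Definition oct := {ffun 'I_8 -> rat}.

(* octtab i j = (s, k) means  e_i * e_j = s e_k. *)
Definition octtab : seq (seq (int * nat)) :=
 [:: [:: (1%Z, 0%N); (1%Z, 1%N); (1%Z, 2%N); (1%Z, 3%N); (1%Z, 4%N); (1%Z, 5%N); (1%Z, 6%N); (1%Z, 7%N)];
    [:: (1%Z, 1%N); ((-1)%Z, 0%N); (1%Z, 4%N); (1%Z, 7%N); ((-1)%Z, 2%N); (1%Z, 6%N); ((-1)%Z, 5%N); ((-1)%Z, 3%N)];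
    [:: (1%Z, 2%N); ((-1)%Z, 4%N); ((-1)%Z, 0%N); (1%Z, 5%N); (1%Z, 1%N); ((-1)%Z, 3%N); (1%Z, 7%N); ((-1)%Z, 6%N)];
    [:: (1%Z, 3%N); ((-1)%Z, 7%N); ((-1)%Z, 5%N); ((-1)%Z, 0%N); (1%Z, 6%N); (1%Z, 2%N); ((-1)%Z, 4%N); (1%Z, 1%N)];
    [:: (1%Z, 4%N); (1%Z, 2%N); ((-1)%Z, 1%N); ((-1)%Z, 6%N); ((-1)%Z, 0%N); (1%Z, 7%N); (1%Z, 3%N); ((-1)%Z, 5%N)];
    [:: (1%Z, 5%N); ((-1)%Z, 6%N); (1%Z, 3%N); ((-1)%Z, 2%N); ((-1)%Z, 7%N); ((-1)%Z, 0%N); (1%Z, 1%N); (1%Z, 4%N)];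
    [:: (1%Z, 6%N); (1%Z, 5%N); ((-1)%Z, 7%N); (1%Z, 4%N); ((-1)%Z, 3%N); ((-1)%Z, 1%N); ((-1)%Z, 0%N); (1%Z, 2%N)];
    [:: (1%Z, 7%N); (1%Z, 3%N); (1%Z, 6%N); ((-1)%Z, 1%N); (1%Z, 5%N); ((-1)%Z, 4%N); ((-1)%Z, 2%N); ((-1)%Z, 0%N)]].

Definition octsgn (i j : 'I_8) : int := (nth (0%Z, 0%N) (nth [::] octtab i) j).1.
Definition octidx (i j : 'I_8) : nat := (nth (0%Z, 0%N) (nth [::] octtab i) j).2.

Definition octmul (x y : oct) : oct :=
  [ffun k : 'I_8 => \sum_(i < 8) \sum_(j < 8)
      (if octidx i j == k then (octsgn i j)%:~R * x i * y j else 0)].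

Definition octconj (x : oct) : oct :=
  [ffun k : 'I_8 => if k == ord0 then x k else - x k].

Definition octN (x : oct) : rat := octmul x (octconj x) ord0.

(** * The order o of integral Cayley numbers (one of Coxeter's seven maximal
    orders for this multiplication table), given by an explicit Z-basis:
    e_0, e_1, e_2, e_3, (e0+e1+e3+e7)/2, (e0+e2+e5+e7)/2, (e0+e3+e4+e5)/2,
    (e0+e4+e6+e7)/2.  o = Z-span of these. *)
Definition obasis_supp : seq (seq nat) :=
  [:: [:: 0]; [:: 1]; [:: 2]; [:: 3];
      [:: 0; 1; 3; 7]; [:: 0; 2; 5; 7]; [:: 0; 3; 4; 5]; [:: 0; 4; 6; 7]]%N.

Definition obasis (i : 'I_8) : oct :=
  [ffun k : 'I_8 => if (k : nat) \in nth [::] obasis_supp i then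
                      (if (i < 4)%N then 1 else 2%:R^-1) else 0].

Definition oelt (c : 'I_8 -> int) : oct := \sum_(i < 8) obasis i *~ c i.

Definition in_o (x : oct) : Prop := exists c : 'I_8 -> int, x = oelt c.

Definition dirichlet_char (N : nat) (chi : int -> algC) : Prop :=
  [/\ chi 1 = 1,
      (forall m n : int, chi (m * n) = chi m * chi n),
      (forall n : int, chi (n + N%:Z) = chi n) &
      (forall n : int, (chi n != 0) = coprimez n N)].

(* chi is primitive: it is not induced from a character mod any proper
   divisor d of N (i.e. its conductor is N). *)
Definition primitive_char (N : nat) (chi : int -> algC) : Prop :=
  forall d : nat, (d %| N)%N -> (d < N)%N ->
    exists n : int, [/\ coprimez n N, (n == 1 %[mod d%:Z])%Z & chi n != 1].

(** An element B = (a x; bar x b) of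
    J_2(Z/NZ) = J_2(Z) (x) Z/NZ is given by a, b in Z/NZ (represented by
    'I_N) and x in o/No (represented by its coordinates c in ('I_N)^8
    w.r.t. the Z-basis obasis of o).  The values det B = ab - N(x) and
    1 - Tr B = 1 - a - b are computed on integer lifts; chi, eta are
    N-periodic so only their classes mod N matter. *)
Definition J2_det (N : nat) (a b : 'I_N) (c : {ffun 'I_8 -> 'I_N}) : int :=
  (a%:Z * b%:Z - numq (octN (oelt (fun i => (c i : nat)%:Z))))%R.

Definition J_J2 (N : nat) (chi1 chi2 : int -> algC) : algC :=
  \sum_(a : 'I_N) \sum_(b : 'I_N) \sum_(c : {ffun 'I_8 -> 'I_N})
     chi1 (J2_det a b c) * chi2 (1 - (a%:Z + b%:Z))%R.

Definition J3 (N : nat) (chi1 chi2 chi3 : int -> algC) : algC :=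
  \sum_(a1 : 'I_N) \sum_(a2 : 'I_N)
    \sum_(a3 : 'I_N | ((a1%:Z + a2%:Z + a3%:Z)%R == 1 %[mod N%:Z])%Z)
       chi1 a1%:Z * chi2 a2%:Z * chi3 a3%:Z.

(* The sum over B = (a x; bar x b) factors as \sum_{a,b} F(ab) eta(1 - a - b), where
   F(m) = \sum_{x in o/No} chi(m - N(x)); so it suffices that F(m) = N^4 chi(m).
   Write N = s0^2 + s1^2 + s2^2 + s3^2 (Lagrange) and q = s0 + s1 e1 + s2 e2 + s3 e3 in o,
   so that N(x + y q) = N(x) + B(x, y q) + N N(y) for the polar form B of N.  Averaging F
   over the translates x + y q turns the sum over y into a sum of chi along a linear form
   in y, which vanishes by primitivity unless the form is 0 mod N, and then N | N(x);
   hence F(m) = k chi(m) for a natural number k.  Finally, in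
   \sum_{x,y} chi(1 - N(x) + N(y)) = k^2, shifting x and y by a common z leaves only the
   diagonal x = y, because B is unimodular on o; so k^2 = N^8. *)

From mathcomp Require Import all_boot all_order all_algebra all_field.
From mathcomp Require Import zify ring.
From Stdlib Require Import FunctionalExtensionality.
Import GRing.Theory Num.Theory.
Set Implicit Arguments. Unset Strict Implicit.
Local Open Scope ring_scope.

Definition o0 : 'I_8 := @Ordinal 8 0 isT.
Definition o1 : 'I_8 := @Ordinal 8 1 isT.
Definition o2 : 'I_8 := @Ordinal 8 2 isT.
Definition o3 : 'I_8 := @Ordinal 8 3 isT.
Definition o4 : 'I_8 := @Ordinal 8 4 isT.
Definition o5 : 'I_8 := @Ordinal 8 5 isT.
Definition o6 : 'I_8 := @Ordinal 8 6 isT.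
Definition o7 : 'I_8 := @Ordinal 8 7 isT.

Definition vec8 (a0 a1 a2 a3 a4 a5 a6 a7 : int) : 'I_8 -> int :=
  fun i => match nat_of_ord i with 0 => a0 | 1 => a1 | 2 => a2 | 3 => a3
   | 4 => a4 | 5 => a5 | 6 => a6 | _ => a7 end%N.

Lemma ord8_ind (P : 'I_8 -> Prop) :
  P o0 -> P o1 -> P o2 -> P o3 -> P o4 -> P o5 -> P o6 -> P o7 -> forall i, P i.
Proof.
move=> P0 P1 P2 P3 P4 P5 P6 P7 [[|[|[|[|[|[|[|[|//]]]]]]]] lti];
  by rewrite (bool_irrelevance lti isT).
Qed.

Lemma big_ord8 (V : nmodType) (F : 'I_8 -> V) :
  \sum_(i < 8) F i = F o0 + F o1 + F o2 + F o3 + F o4 + F o5 + F o6 + F o7.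
Proof.
rewrite !big_ord_recr big_ord0 /= add0r.
by congr (_ + _ + _ + _ + _ + _ + _ + _); congr F; apply: val_inj.
Qed.

Definition vadd n (u v : 'I_n -> int) : 'I_n -> int := fun i => u i + v i.
Definition vsub n (u v : 'I_n -> int) : 'I_n -> int := fun i => u i - v i.
Definition vscale n (c : int) (u : 'I_n -> int) : 'I_n -> int := fun i => c * u i.
Definition dot n (u v : 'I_n -> int) : int := \sum_(i < n) u i * v i.

Lemma dotDr n (l u v : 'I_n -> int) : dot l (vadd u v) = dot l u + dot l v.
Proof. by rewrite /dot -big_split; apply: eq_bigr => i _; rewrite mulrDr. Qed.

Lemma dotZr n (l w : 'I_n -> int) c : dot l (vscale c w) = c * dot l w.
Proof. by rewrite /dot mulr_sumr; apply: eq_bigr => i _; rewrite mulrCA. Qed.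

Lemma dotZl n (l w : 'I_n -> int) c : dot (vscale c w) l = c * dot w l.
Proof. by rewrite /dot mulr_sumr; apply: eq_bigr => i _; rewrite mulrA. Qed.

Definition sum4sq (s0 s1 s2 s3 : int) : int := s0 * s0 + s1 * s1 + s2 * s2 + s3 * s3.

(* The norm on o in the coordinates of [obasis] (see [numq_octN_oelt]). *)
Definition oform (u : 'I_8 -> int) : int :=
  u o0 * u o0 + u o1 * u o1 + u o2 * u o2 + u o3 * u o3
  + u o4 * u o4 + u o5 * u o5 + u o6 * u o6 + u o7 * u o7
  + u o0 * (u o4 + u o5 + u o6 + u o7) + u o1 * u o4 + u o2 * u o5
  + u o3 * (u o4 + u o6) + u o4 * (u o5 + u o6 + u o7) + u o5 * (u o6 + u o7)
  + u o6 * u o7.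

(* The Gram matrix of the polar form of [oform]; it is unimodular. *)
Definition ogram (x : 'I_8 -> int) : 'I_8 -> int :=
  vec8
    (2 * x o0 + x o4 + x o5 + x o6 + x o7)
    (2 * x o1 + x o4)
    (2 * x o2 + x o5)
    (2 * x o3 + x o4 + x o6)
    (x o0 + x o1 + x o3 + 2 * x o4 + x o5 + x o6 + x o7)
    (x o0 + x o2 + x o4 + 2 * x o5 + x o6 + x o7)
    (x o0 + x o3 + x o4 + x o5 + 2 * x o6 + x o7)
    (x o0 + x o4 + x o5 + x o6 + 2 * x o7).

Definition ogram_inv (x : 'I_8 -> int) : 'I_8 -> int :=
  vec8
    (2 * x o0 + 2 * x o1 - x o2 + 3 * x o3 - 4 * x o4 + 2 * x o5 - 2 * x o6 + x o7)
    (2 * x o0 + 4 * x o1 - 2 * x o2 + 5 * x o3 - 7 * x o4 + 4 * x o5 - 3 * x o6 + 2 * x o7)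
    (- x o0 - 2 * x o1 + 2 * x o2 - 3 * x o3 + 4 * x o4 - 3 * x o5 + 2 * x o6 - x o7)
    (3 * x o0 + 5 * x o1 - 3 * x o2 + 8 * x o3 - 10 * x o4 + 6 * x o5 - 5 * x o6 + 3 * x o7)
    (- 4 * x o0 - 7 * x o1 + 4 * x o2 - 10 * x o3 + 14 * x o4 - 8 * x o5 + 6 * x o6 - 4 * x o7)
    (2 * x o0 + 4 * x o1 - 3 * x o2 + 6 * x o3 - 8 * x o4 + 6 * x o5 - 4 * x o6 + 2 * x o7)
    (- 2 * x o0 - 3 * x o1 + 2 * x o2 - 5 * x o3 + 6 * x o4 - 4 * x o5 + 4 * x o6 - 2 * x o7)
    (x o0 + 2 * x o1 - x o2 + 3 * x o3 - 4 * x o4 + 2 * x o5 - 2 * x o6 + 2 * x o7).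

(* The coordinates of y * q, for q = s0 + s1 e1 + s2 e2 + s3 e3 in o. *)
Definition qmul (s0 s1 s2 s3 : int) (y : 'I_8 -> int) : 'I_8 -> int :=
  vec8
    (s0 * y o0 - s1 * y o1 - s2 * y o1 - s3 * y o1 + s1 * y o2 - s2 * y o2 + s1 * y o3 - s3 * y o3
     - s3 * y o4 - s3 * y o6 + s2 * y o7 - s3 * y o7)
    (s1 * y o0 + s0 * y o1 - s2 * y o1 - s3 * y o1 + s1 * y o2 + s3 * y o2 + s1 * y o3 - s2 * y o3
     + s1 * y o4 - s3 * y o4 + s2 * y o5 - s2 * y o6 - s3 * y o6 + s1 * y o7 + s2 * y o7
     - 2 * s3 * y o7)
    (s2 * y o0 + s2 * y o1 + s0 * y o2 - s1 * y o2 - s3 * y o2 + s2 * y o3 + s2 * y o4 - s3 * y o5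
     + s1 * y o6 + s2 * y o6 + s3 * y o7)
    (s3 * y o0 - 2 * s2 * y o1 - s3 * y o1 + 2 * s1 * y o2 + s3 * y o2 + s0 * y o3 + s1 * y o3
     - s2 * y o3 + s1 * y o4 + 2 * s2 * y o5 + s3 * y o5 - s1 * y o6 - s3 * y o6 + s1 * y o7
     + 2 * s2 * y o7 - 2 * s3 * y o7)
    (2 * s2 * y o1 + 2 * s3 * y o1 - 2 * s1 * y o2 - 2 * s3 * y o2 - 2 * s1 * y o3 + 2 * s2 * y o3
     + s0 * y o4 - s1 * y o4 + s3 * y o4 + s1 * y o5 - 2 * s2 * y o5 - s3 * y o5 + s1 * y o6
     + s2 * y o6 + 2 * s3 * y o6 - s1 * y o7 - 3 * s2 * y o7 + 3 * s3 * y o7)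
    (- 2 * s2 * y o1 + 2 * s1 * y o2 + 2 * s3 * y o2 - 2 * s2 * y o3 - s2 * y o4 + s0 * y o5
     + s2 * y o5 + s3 * y o5 - s1 * y o6 - s2 * y o6 - s3 * y o6 + s1 * y o7 + s2 * y o7
     - 2 * s3 * y o7)
    (2 * s2 * y o1 - 2 * s1 * y o2 - s2 * y o5 + s0 * y o6 + s1 * y o6 + s3 * y o6 - s2 * y o7
     + 2 * s3 * y o7)
    (s2 * y o4 - s1 * y o5 + s2 * y o5 - s1 * y o6 - s3 * y o6 + s0 * y o7 + s2 * y o7 - s3 * y o7).

(* [qmul] transposed with respect to the polar form: y |-> B(x, y * q). *)
Definition qmul_adj (s0 s1 s2 s3 : int) (x : 'I_8 -> int) : 'I_8 -> int :=
  vec8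
    (s0 * ogram x o0 + s1 * ogram x o1 + s2 * ogram x o2 + s3 * ogram x o3)
    (- s1 * ogram x o0 - s2 * ogram x o0 - s3 * ogram x o0 + s0 * ogram x o1 - s2 * ogram x o1
     - s3 * ogram x o1 + s2 * ogram x o2 - 2 * s2 * ogram x o3 - s3 * ogram x o3
     + 2 * s2 * ogram x o4 + 2 * s3 * ogram x o4 - 2 * s2 * ogram x o5 + 2 * s2 * ogram x o6)
    (s1 * ogram x o0 - s2 * ogram x o0 + s1 * ogram x o1 + s3 * ogram x o1 + s0 * ogram x o2
     - s1 * ogram x o2 - s3 * ogram x o2 + 2 * s1 * ogram x o3 + s3 * ogram x o3
     - 2 * s1 * ogram x o4 - 2 * s3 * ogram x o4 + 2 * s1 * ogram x o5 + 2 * s3 * ogram x o5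
     - 2 * s1 * ogram x o6)
    (s1 * ogram x o0 - s3 * ogram x o0 + s1 * ogram x o1 - s2 * ogram x o1 + s2 * ogram x o2
     + s0 * ogram x o3 + s1 * ogram x o3 - s2 * ogram x o3 - 2 * s1 * ogram x o4
     + 2 * s2 * ogram x o4 - 2 * s2 * ogram x o5)
    (- s3 * ogram x o0 + s1 * ogram x o1 - s3 * ogram x o1 + s2 * ogram x o2 + s1 * ogram x o3
     + s0 * ogram x o4 - s1 * ogram x o4 + s3 * ogram x o4 - s2 * ogram x o5 + s2 * ogram x o7)
    (s2 * ogram x o1 - s3 * ogram x o2 + 2 * s2 * ogram x o3 + s3 * ogram x o3 + s1 * ogram x o4
     - 2 * s2 * ogram x o4 - s3 * ogram x o4 + s0 * ogram x o5 + s2 * ogram x o5 + s3 * ogram x o5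
     - s2 * ogram x o6 - s1 * ogram x o7 + s2 * ogram x o7)
    (- s3 * ogram x o0 - s2 * ogram x o1 - s3 * ogram x o1 + s1 * ogram x o2 + s2 * ogram x o2
     - s1 * ogram x o3 - s3 * ogram x o3 + s1 * ogram x o4 + s2 * ogram x o4 + 2 * s3 * ogram x o4
     - s1 * ogram x o5 - s2 * ogram x o5 - s3 * ogram x o5 + s0 * ogram x o6 + s1 * ogram x o6
     + s3 * ogram x o6 - s1 * ogram x o7 - s3 * ogram x o7)
    (s2 * ogram x o0 - s3 * ogram x o0 + s1 * ogram x o1 + s2 * ogram x o1 - 2 * s3 * ogram x o1
     + s3 * ogram x o2 + s1 * ogram x o3 + 2 * s2 * ogram x o3 - 2 * s3 * ogram x o3
     - s1 * ogram x o4 - 3 * s2 * ogram x o4 + 3 * s3 * ogram x o4 + s1 * ogram x o5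
     + s2 * ogram x o5 - 2 * s3 * ogram x o5 - s2 * ogram x o6 + 2 * s3 * ogram x o6
     + s0 * ogram x o7 + s2 * ogram x o7 - s3 * ogram x o7).

Ltac unfold_oforms :=
  cbv beta iota delta [oform ogram ogram_inv qmul qmul_adj vadd vsub vscale
    sum4sq vec8 o0 o1 o2 o3 o4 o5 o6 o7 nat_of_ord].

Lemma oform_vadd x y : oform (vadd x y) = oform x + dot (ogram x) y + oform y.
Proof. rewrite /dot big_ord8; unfold_oforms; ring. Qed.

Lemma oform_vscale c w : oform (vscale c w) = c * c * oform w.
Proof. unfold_oforms; ring. Qed.

Lemma oform_vadd_vscale u c w :
  oform (vadd u (vscale c w)) = oform u + c * (dot (ogram u) w + c * oform w).
Proof. by rewrite oform_vadd oform_vscale dotZr; ring. Qed.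

Lemma oform_vadd_subr x y z :
  oform (vadd x z) - oform (vadd y z) = oform x - oform y + dot (ogram (vsub x y)) z.
Proof. rewrite /dot big_ord8; unfold_oforms; ring. Qed.

Lemma ogram0 : ogram (fun=> 0) = fun=> 0.
Proof. by apply: functional_extensionality; apply: ord8_ind; unfold_oforms; ring. Qed.

Lemma ogram_invK : cancel ogram ogram_inv.
Proof. by move=> x; apply: functional_extensionality; apply: ord8_ind; unfold_oforms; ring. Qed.

Lemma ogram_inv_vscale c w : ogram_inv (vscale c w) = vscale c (ogram_inv w).
Proof. by apply: functional_extensionality; apply: ord8_ind; unfold_oforms; ring. Qed.

Lemma oform_qmul s0 s1 s2 s3 y :
  oform (qmul s0 s1 s2 s3 y) = oform y * sum4sq s0 s1 s2 s3.
Proof. unfold_oforms; ring. Qed.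

Lemma dot_qmul_adj s0 s1 s2 s3 x y :
  dot (qmul_adj s0 s1 s2 s3 x) y = dot (ogram x) (qmul s0 s1 s2 s3 y).
Proof. rewrite /dot !big_ord8; unfold_oforms; ring. Qed.

Lemma ogram_inv_qmul_adj s0 s1 s2 s3 x :
  ogram_inv (qmul_adj s0 s1 s2 s3 x) = qmul s0 (- s1) (- s2) (- s3) x.
Proof. by apply: functional_extensionality; apply: ord8_ind; unfold_oforms; ring. Qed.

Lemma oform_vadd_qmul s0 s1 s2 s3 x y :
  oform (vadd x (qmul s0 s1 s2 s3 y)) =
  oform x + dot (qmul_adj s0 s1 s2 s3 x) y + sum4sq s0 s1 s2 s3 * oform y.
Proof. by rewrite oform_vadd oform_qmul dot_qmul_adj mulrC. Qed.

Lemma octidx_eq0 i j : (octidx i j == 0%N) = (i == j).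
Proof. by move: i; apply: ord8_ind; move: j; apply: ord8_ind. Qed.

Lemma octsgn_diag i : octsgn i i = if i == ord0 then 1 else -1.
Proof. by move: i; apply: ord8_ind. Qed.

Lemma octN_sum_sq (x : oct) : octN x = \sum_(k < 8) x k * x k.
Proof.
rewrite /octN /octmul ffunE; apply: eq_bigr => i _.
rewrite (bigD1 i) //= big1 => [|j ji]; last by rewrite octidx_eq0 eq_sym (negbTE ji).
rewrite octidx_eq0 eqxx octsgn_diag /octconj ffunE addr0.
by case: (i == ord0); ring.
Qed.

Lemma oelt_coord u k : oelt u k = \sum_(i < 8) obasis i k * (u i)%:~R.
Proof. by rewrite /oelt sum_ffunE; apply: eq_bigr => i _; rewrite ffunMzE mulrzr. Qed.

Lemma numq_octN_oelt u : numq (octN (oelt u)) = oform u.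
Proof.
suff -> : octN (oelt u) = (oform u)%:~R by rewrite numq_int.
rewrite octN_sum_sq big_ord8 !oelt_coord !big_ord8 /obasis !ffunE /=.
by unfold_oforms; rewrite !(rmorphD, rmorphM) /=; field.
Qed.

Lemma sum4sqM a0 a1 a2 a3 b0 b1 b2 b3 :
  sum4sq a0 a1 a2 a3 * sum4sq b0 b1 b2 b3 =
  sum4sq (a0 * b0 + a1 * b1 + a2 * b2 + a3 * b3) (a0 * b1 - a1 * b0 + a2 * b3 - a3 * b2)
         (a0 * b2 - a1 * b3 - a2 * b0 + a3 * b1) (a0 * b3 + a1 * b2 - a2 * b1 - a3 * b0).
Proof. rewrite /sum4sq; ring. Qed.

Lemma sum4sqZ c a0 a1 a2 a3 :
  sum4sq (c * a0) (c * a1) (c * a2) (c * a3) = c * c * sum4sq a0 a1 a2 a3.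
Proof. rewrite /sum4sq; ring. Qed.

Lemma sum4sq_ge0 a b c d : 0 <= sum4sq a b c d.
Proof. by rewrite /sum4sq !addr_ge0 // sqr_ge0. Qed.

Lemma sum4sq_eq0 a b c d : sum4sq a b c d = 0 -> [/\ a = 0, b = 0, c = 0 & d = 0].
Proof. rewrite /sum4sq => E; split; nia. Qed.

Lemma sq_mod_inj (p h a b : nat) : prime p -> p = h.*2.+1 -> (a <= h)%N -> (b <= h)%N ->
  (a * a = b * b %[mod p])%N -> a = b.
Proof.
move=> pp ph ah bh.
wlog ba : a b ah bh / (b <= a)%N => [W|].
  by case/orP: (leq_total b a) => ? E; [apply: W | symmetry; apply: W].
move=> /eqP; rewrite eqn_mod_dvd ?leq_mul // !mulnn subn_sqr Euclid_dvdM //.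
by case/orP=> /dvdn_leq pab; have [//|nab] := eqVneq a b; have := pab ltac:(lia); lia.
Qed.

Lemma prime_dvd_sum2sq_add1 (p : nat) : prime p -> odd p ->
  exists x y : nat, [/\ (x <= p./2)%N, (y <= p./2)%N & (p %| x * x + y * y + 1)%N].
Proof.
move=> pp op; set h := p./2.
have ph : p = h.*2.+1 by rewrite -[p in LHS]odd_double_half op add1n.
have p0 : (0 < p)%N by rewrite ph.
have lt_pred (k : nat) : (p.-1 - k < p)%N by lia.
have ord_le (a : 'I_h.+1) : (a <= h)%N by rewrite -ltnS.
(* pigeonhole on the h + 1 residues a^2 and the h + 1 residues -1 - b^2 *)
pose f (z : 'I_h.+1 + 'I_h.+1) : 'I_p := match z with
  | inl a => Ordinal (ltn_pmod (a * a)%N p0)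
  | inr b => Ordinal (lt_pred (b * b %% p)%N) end.
have [/injectiveP inj|/injectivePn [z1 [z2 nz ef]]] := boolP (injectiveb f).
  by have := leq_card f inj; rewrite card_sum !card_ord ph; lia.
have sol (a b : 'I_h.+1) : (a * a %% p = p.-1 - b * b %% p)%N ->
    exists x y : nat, [/\ (x <= h)%N, (y <= h)%N & (p %| x * x + y * y + 1)%N].
  move=> E; exists a, b; split; rewrite ?ord_le //.
  have := ltn_pmod (b * b) p0.
  rewrite /dvdn -modnDml -[((a * a + b * b) %% p)%N]modnDm E subnK; last by lia.
  by rewrite modnDml addn1 prednK ?modnn.
move: nz ef; case: z1 => a; case: z2 => b nz /(congr1 val) /= E.
- by case/eqP: nz; congr inl; apply/val_inj/(sq_mod_inj pp ph (ord_le a) (ord_le b) E).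
- exact: sol E.
- exact: sol (esym E).
- case/eqP: nz; congr inr; apply/val_inj/(sq_mod_inj pp ph (ord_le a) (ord_le b)).
  by move: E (ltn_pmod (a * a) p0) (ltn_pmod (b * b) p0); lia.
Qed.

Lemma sum4sq_half (n : nat) (x0 x1 x2 x3 : int) : (n.*2)%:Z = sum4sq x0 x1 x2 x3 ->
  exists a b c d : int, n%:Z = sum4sq a b c d.
Proof.
have halve a b c d : (2 %| a - b)%Z -> (2 %| c - d)%Z -> (n.*2)%:Z = sum4sq a b c d ->
    exists a b c d : int, n%:Z = sum4sq a b c d.
  move=> /dvdzP[u ab] /dvdzP[v cd] E; exists (b + u), u, (d + v), v.
  have : sum4sq a b c d = 2 * sum4sq (b + u) u (d + v) v.
    have -> : a = b + u * 2 by lia.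
    have -> : c = d + v * 2 by lia.
    by rewrite /sum4sq; ring.
  lia.
have sq_even (x : int) : (2 %| x * x - x)%Z.
  rewrite (_ : x * x - x = x * (x - 1)); last by ring.
  by have [?|?] := boolP (2 %| x)%Z; [apply: dvdz_mulr | apply: dvdz_mull; lia].
move=> E; have : (2 %| x0 + x1 + x2 + x3)%Z.
  by move: E (sq_even x0) (sq_even x1) (sq_even x2) (sq_even x3); rewrite /sum4sq; lia.
move=> ev; have [h01|h01] := boolP (2 %| x0 - x1)%Z.
  by apply: (halve x0 x1 x2 x3) => //; lia.
have [h02|h02] := boolP (2 %| x0 - x2)%Z.
  by apply: (halve x0 x2 x1 x3); [|lia|rewrite E /sum4sq; ring].
by apply: (halve x0 x3 x1 x2); [lia|lia|rewrite E /sum4sq; ring].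
Qed.

Lemma sum4sq_descent_identity (M P r x0 x1 x2 x3 t0 t1 t2 t3 : int) : M != 0 ->
  sum4sq x0 x1 x2 x3 = M * P ->
  sum4sq (x0 + M * t0) (x1 + M * t1) (x2 + M * t2) (x3 + M * t3) = M * r ->
  sum4sq (P + (x0 * t0 + x1 * t1 + x2 * t2 + x3 * t3))
         (x0 * t1 - x1 * t0 + x2 * t3 - x3 * t2) (x0 * t2 - x1 * t3 - x2 * t0 + x3 * t1)
         (x0 * t3 + x1 * t2 - x2 * t1 - x3 * t0) = r * P.
Proof.
move=> M0 Ex Ey; apply: (@mulfI _ (M * M)); first exact: mulf_neq0.
rewrite -sum4sqZ mulrDr (_ : M * M * (r * P) = M * P * (M * r)); last by ring.
by rewrite -Ex -Ey sum4sqM /sum4sq; ring.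
Qed.

Lemma sum4sq_descent_odd (p m : nat) (x0 x1 x2 x3 : int) :
  prime p -> odd m -> (1 < m < p)%N ->
  (m * p)%N%:Z = sum4sq x0 x1 x2 x3 ->
  exists r (a b c d : int), (0 < r < m)%N /\ (r * p)%N%:Z = sum4sq a b c d.
Proof.
move=> pp om /andP[m1 mp] E.
pose M : int := m%:Z; pose H : int := (m./2)%:Z; pose P : int := p%:Z.
have MH : M = 2 * H + 1 by rewrite /M /H -[m in LHS]odd_double_half om; lia.
have M0 : M != 0 by lia.
have {}E : sum4sq x0 x1 x2 x3 = M * P by rewrite -E /M /P; lia.
have centred (x : int) : exists t, - H <= x + M * t <= H.
  by exists (- ((x + H) %/ M)%Z); lia.
have [t0 b0] := centred x0; have [t1 b1] := centred x1.
have [t2 b2] := centred x2; have [t3 b3] := centred x3.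
pose r := P + 2 * (x0 * t0 + x1 * t1 + x2 * t2 + x3 * t3) + M * sum4sq t0 t1 t2 t3.
have Ey : sum4sq (x0 + M * t0) (x1 + M * t1) (x2 + M * t2) (x3 + M * t3) = M * r.
  by rewrite /r !mulrDr -E /sum4sq; ring.
have r_lt : r < M.
  have : sum4sq (x0 + M * t0) (x1 + M * t1) (x2 + M * t2) (x3 + M * t3) <= 4 * (H * H).
    by rewrite /sum4sq; nia.
  by rewrite Ey; nia.
have r_ge0 : 0 <= r.
  have := sum4sq_ge0 (x0 + M * t0) (x1 + M * t1) (x2 + M * t2) (x3 + M * t3).
  by rewrite Ey; nia.
have r_neq0 : r != 0.
  apply/eqP => r0; move: Ey; rewrite r0 mulr0 => /sum4sq_eq0[y0 y1 y2 y3].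
  have ex0 : x0 = M * - t0 by lia.
  have ex1 : x1 = M * - t1 by lia.
  have ex2 : x2 = M * - t2 by lia.
  have ex3 : x3 = M * - t3 by lia.
  have : M * P = M * (M * sum4sq t0 t1 t2 t3).
    by rewrite -E ex0 ex1 ex2 ex3 sum4sqZ /sum4sq; ring.
  move/(mulfI M0) => PM; have : (M %| P)%Z.
    by apply/dvdzP; exists (sum4sq t0 t1 t2 t3); rewrite PM mulrC.
  by case/primeP: pp => _ /[apply] /orP[] /eqP; lia.
exists (absz r); do 4!eexists; split; first by lia.
by symmetry; apply: (etrans (sum4sq_descent_identity M0 E Ey)); lia.
Qed.

Lemma prime_sum4sq (p : nat) : prime p -> exists a b c d : int, p%:Z = sum4sq a b c d.
Proof.
move=> pp; have [op|ep] := boolP (odd p); last first.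
  have -> : p = 2%N by apply/eqP; rewrite eq_sym -dvdn_prime2 // dvdn2.
  by exists 1, 1, 0, 0.
suff descent m : (0 < m < p)%N -> forall x0 x1 x2 x3, (m * p)%N%:Z = sum4sq x0 x1 x2 x3 ->
    exists a b c d : int, p%:Z = sum4sq a b c d.
  have [x [y [hx hy /dvdnP[m hm]]]] := prime_dvd_sum2sq_add1 pp op.
  have ph : p = (p./2).*2.+1 by rewrite -[p in LHS]odd_double_half op add1n.
  apply: (descent m _ x y 1 0); last by rewrite /sum4sq -hm; lia.
  apply/andP; split; first by move: hm; case: m => //=; lia.
  rewrite -(ltn_pmul2r (prime_gt0 pp)) -hm; move: (leq_mul hx hx) (leq_mul hy hy) ph.
  move: (prime_gt1 pp); set h := p./2; nia.
elim/ltn_ind: m => m IH /andP[m0 mp] x0 x1 x2 x3 E.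
have [m1|m1] := eqVneq m 1%N; first by exists x0, x1, x2, x3; rewrite -E m1 mul1n.
have [om|em] := boolP (odd m).
  have [r [a [b [c [d [/andP[r0 rm] Er]]]]]] := sum4sq_descent_odd pp om (ltac:(lia)) E.
  exact: IH r rm (ltac:(lia)) a b c d Er.
have mk : m = (m./2).*2 by rewrite -[m in LHS]odd_double_half (negbTE em).
have Ek : ((m./2 * p).*2)%:Z = sum4sq x0 x1 x2 x3 by rewrite -E {2}mk; lia.
have [a [b [c [d {}Ek]]]] := sum4sq_half Ek.
by apply: (IH m./2 _ _ a b c d Ek); lia.
Qed.

Lemma nat_sum4sq (n : nat) : exists a b c d : int, n%:Z = sum4sq a b c d.
Proof.
elim/ltn_ind: n => n IH; have [n1|n1] := leqP n 1.
  by case: n n1 {IH} => [|[|]] // _; [exists 0, 0, 0, 0 | exists 1, 0, 0, 0].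
have [q nq] := dvdnP (pdiv_dvd n); have pp := pdiv_prime n1.
have [a [b [c [d Eq]]]] : exists a b c d : int, q%:Z = sum4sq a b c d.
  by apply: IH; rewrite nq ltn_Pmulr ?prime_gt1 //; move: n1; rewrite nq; case: q {nq}.
have [a' [b' [c' [d' Ep]]]] := prime_sum4sq pp.
by rewrite nq PoszM Eq Ep sum4sqM; do 4!eexists.
Qed.

Definition intv (n N : nat) (x : {ffun 'I_n -> 'I_N}) : 'I_n -> int :=
  fun i => (x i : nat)%:Z.

Lemma dirichlet_char_periodic N chi : dirichlet_char N chi ->
  forall r k, chi (r + N%:Z * k) = chi r.
Proof.
case=> _ _ chiN _.
have chiNn r (k : nat) : chi (r + N%:Z * k%:Z) = chi r.
  by elim: k => [|k IH]; rewrite ?mulr0 ?addr0 // -addn1 PoszD mulrDr mulr1 addrA chiN.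
move=> r [k|k]; first exact: chiNn.
by rewrite -(chiNn _ k.+1) -addrA -mulrDr NegzE addNr mulr0 addr0.
Qed.

Section ModN.
Variables (N : nat) (N_gt0 : (0 < N)%N).

Lemma ord_modz_subproof (r : int) : (absz (r %% N%:Z)%Z < N)%N.
Proof.
have N0 : 0 < N%:Z by rewrite ltz_nat.
by have := ltz_pmod r N0; have := modz_ge0 r (lt0r_neq0 N0); lia.
Qed.

Definition ord_modz (r : int) : 'I_N := Ordinal (ord_modz_subproof r).

Lemma ord_modzE r : (ord_modz r : nat)%:Z = (r %% N%:Z)%Z.
Proof. by rewrite /= gez0_abs // modz_ge0 // lt0n_neq0. Qed.

Lemma ord_addz_modz_inj (c : int) : injective (fun a : 'I_N => ord_modz ((a : nat)%:Z + c)).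
Proof.
move=> a b /(congr1 (fun o : 'I_N => (o : nat)%:Z)); rewrite !ord_modzE => /eqP.
by rewrite eqz_modDr !modz_small ?ltn_ord ?ltz_nat //= => /eqP[] /val_inj.
Qed.

Lemma ord_sum3_eq1 (a b c : 'I_N) :
  ((a%:Z + b%:Z + c%:Z)%R == 1 %[mod N%:Z])%Z = (c == ord_modz (1 - (a%:Z + b%:Z))).
Proof.
rewrite -[X in (_ == X %[mod _])%Z](subrKC (a%:Z + b%:Z) 1) eqz_modDl.
rewrite -val_eqE -eqz_nat ord_modzE (modz_small (m := c%:Z)) //.
by have := ltn_ord c; lia.
Qed.

Lemma modz_periodic (T : Type) (g : int -> T) :
  (forall r k, g (r + N%:Z * k) = g r) -> forall r, g (r %% N%:Z)%Z = g r.
Proof. by move=> gN r; rewrite [in RHS](divz_eq r N%:Z) addrC mulrC gN. Qed.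

Lemma sum_ffun_translate n (V : nmodType) (f : ('I_n -> int) -> V) (v : 'I_n -> int) :
  (forall u w, f (vadd u (vscale N%:Z w)) = f u) ->
  \sum_(x : {ffun 'I_n -> 'I_N}) f (intv x) =
  \sum_(x : {ffun 'I_n -> 'I_N}) f (vadd (intv x) v).
Proof.
move=> fN.
pose tau (x : {ffun 'I_n -> 'I_N}) := [ffun i => ord_modz ((x i : nat)%:Z + v i)].
have tau_inj : injective tau.
  move=> x y /ffunP xy; apply/ffunP => i.
  by have := xy i; rewrite !ffunE => /ord_addz_modz_inj.
rewrite (reindex_inj tau_inj); apply: eq_bigr => x _.
rewrite (_ : intv (tau x) = vadd (vadd (intv x) v)
  (vscale N%:Z (fun i => - (((x i : nat)%:Z + v i) %/ N%:Z)%Z))) ?fN //.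
apply: functional_extensionality => i; rewrite /intv /vadd /vscale ffunE ord_modzE.
by rewrite {2}(divz_eq ((x i : nat)%:Z + v i) N%:Z); ring.
Qed.

Lemma sum_ord_affine (V : nmodType) (g : int -> V) (u t : int) :
  (forall r k, g (r + N%:Z * k) = g r) -> coprimez u N ->
  \sum_(s : 'I_N) g (s : nat)%:Z = \sum_(s : 'I_N) g (u * (s : nat)%:Z + t).
Proof.
move=> gN uN; pose sg (s : 'I_N) := ord_modz (u * (s : nat)%:Z + t).
have sg_inj : injective sg.
  move=> s s' /(congr1 (fun o : 'I_N => (o : nat)%:Z)); rewrite !ord_modzE => /eqP.
  rewrite eqz_modDr eqz_mod_dvd -mulrBr Gauss_dvdzr; last by rewrite coprimez_sym.
  move=> /dvdzP[q Hq]; apply: val_inj => /=.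
  have sN := ltn_ord s; have sN' := ltn_ord s'.
  suff q0 : q = 0 by move: Hq; rewrite q0 mul0r; lia.
  by nia.
rewrite (reindex_inj sg_inj); apply: eq_bigr => s _.
by rewrite ord_modzE (modz_periodic gN).
Qed.

Variable chi : int -> algC.
Hypotheses (chi_dchar : dirichlet_char N chi) (chi_prim : primitive_char N chi).

Let chiN := dirichlet_char_periodic chi_dchar.

Lemma primitive_char_sum_line b k : ~~ (N%:Z %| k)%Z ->
  \sum_(s : 'I_N) chi (b - k * (s : nat)%:Z) = 0.
Proof.
move=> Nk; have [_ chiM _ _] := chi_dchar.
have dN : (absz (gcdz k N) %| N)%N by have := dvdz_gcdr k N%:Z.
have d_ltN : (absz (gcdz k N) < N)%N.
  rewrite ltn_neqAle (dvdn_leq N_gt0 dN) andbT; apply: contra Nk => /eqP dE.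
  by rewrite -dE; have := dvdz_gcdl k N%:Z.
(* primitivity gives n = 1 mod gcd(k, N) with chi n != 1; multiplication by n then
   permutes the terms of the sum up to a shift of s *)
have [n [nN n1 chin]] := chi_prim dN d_ltN.
have [r n_eq] : exists r, n = r * gcdz k N + 1.
  by move: n1; rewrite eqz_mod_dvd => /dvdzP[r nr]; exists r; rewrite -nr subrK.
have [u [v uv]] := Bezoutz k N%:Z.
set S := \sum_(s : 'I_N) _.
suff : chi n * S = S.
  by move/eqP; rewrite -subr_eq0 -{2}[S]mul1r -mulrBl mulf_eq0 subr_eq0 (negbTE chin) => /eqP.
rewrite /S mulr_sumr.
transitivity (\sum_(s : 'I_N) chi (b - k * (n * (s : nat)%:Z - u * r * b))).
  apply: eq_bigr => s _; rewrite -chiM -(chiN _ (- (r * b * v))) n_eq -uv.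
  by congr chi; ring.
symmetry; apply: (@sum_ord_affine _ (fun x => chi (b - k * x)) _ _ _ nN) => x z.
by rewrite -[RHS](chiN _ (- (k * z))); congr chi; ring.
Qed.

Lemma char_sum_dot n (l : 'I_n -> int) (a : int) :
  \sum_(y : {ffun 'I_n -> 'I_N}) chi (a - dot l (intv y)) =
  if [forall j, (N%:Z %| l j)%Z] then (N ^ n)%:R * chi a else 0.
Proof.
case: ifP => [/forallP Nl | /negbT /forallPn [j Nlj]].
  rewrite (_ : _ * chi a = \sum_(y : {ffun 'I_n -> 'I_N}) chi a); last first.
    by rewrite sumr_const card_ffun !card_ord mulr_natl.
  apply: eq_bigr => y _.
  have -> : l = vscale N%:Z (fun i => (l i %/ N%:Z)%Z).
    by apply: functional_extensionality => i; rewrite /vscale mulrC divzK.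
  by rewrite dotZl -mulrN chiN.
(* translating y along the j-th axis turns the sum into a line sum in the j-th coordinate *)
set S := \sum_(y : {ffun 'I_n -> 'I_N}) _.
pose f (u : 'I_n -> int) := chi (a - dot l u).
have fN u w : f (vadd u (vscale N%:Z w)) = f u.
  by rewrite /f dotDr dotZr opprD addrA -mulrN chiN.
have : N%:R * S = 0.
  rewrite (_ : _ * S = \sum_(s : 'I_N) S); last by rewrite sumr_const card_ord mulr_natl.
  transitivity (\sum_(s : 'I_N) \sum_(y : {ffun 'I_n -> 'I_N})
     chi ((a - dot l (intv y)) - l j * (s : nat)%:Z)).
    apply: eq_bigr => s _.
    rewrite /S (sum_ffun_translate (fun i => if i == j then (s : nat)%:Z else 0) fN).
    apply: eq_bigr => y _; rewrite /f dotDr opprD addrA; congr (chi (_ - _)).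
    by rewrite /dot (bigD1 j) //= eqxx big1 ?addr0 // => i /negbTE ->; rewrite mulr0.
  by rewrite exchange_big big1 // => y _; apply: primitive_char_sum_line.
by move/eqP; rewrite mulf_eq0 pnatr_eq0 (negbTE (lt0n_neq0 N_gt0)) => /eqP.
Qed.

End ModN.

Section NormCharSum.
Variables (N : nat) (N_gt0 : (0 < N)%N).

Lemma oform_dvd_qmul_adj s0 s1 s2 s3 x : N%:Z = sum4sq s0 s1 s2 s3 ->
  (forall j, (N%:Z %| qmul_adj s0 s1 s2 s3 x j)%Z) -> (N%:Z %| oform x)%Z.
Proof.
move=> Ns Nadj; have N0 : N%:Z != 0 by rewrite eqz_nat -lt0n.
pose w j := (qmul_adj s0 s1 s2 s3 x j %/ N%:Z)%Z.
have adjE : qmul_adj s0 s1 s2 s3 x = vscale N%:Z w.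
  by apply: functional_extensionality => j; rewrite /vscale mulrC divzK.
(* ogram_inv (qmul_adj x) = x * conj q, whose norm is N * oform x *)
have : oform x * N%:Z = N%:Z * N%:Z * oform (ogram_inv w).
  rewrite -oform_vscale -ogram_inv_vscale -adjE ogram_inv_qmul_adj oform_qmul Ns.
  by rewrite /sum4sq; ring.
by rewrite mulrC -mulrA => /(mulfI N0) ->; apply: dvdz_mulr.
Qed.

Lemma ogram_dvd_inj (x y : {ffun 'I_8 -> 'I_N}) :
  (forall j, (N%:Z %| ogram (vsub (intv x) (intv y)) j)%Z) -> x = y.
Proof.
move=> Ndiff; pose w j := (ogram (vsub (intv x) (intv y)) j %/ N%:Z)%Z.
have gramE : ogram (vsub (intv x) (intv y)) = vscale N%:Z w.
  by apply: functional_extensionality => j; rewrite /vscale mulrC divzK.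
apply/ffunP => i; apply: val_inj => /=.
have := congr1 (fun u => ogram_inv u i) gramE.
rewrite ogram_invK ogram_inv_vscale /vsub /vscale /intv => Ei.
have xN := ltn_ord (x i); have yN := ltn_ord (y i); set q := ogram_inv w i in Ei.
suff q0 : q = 0 by move: Ei; rewrite q0 mulr0; lia.
by nia.
Qed.

Variable chi : int -> algC.
Hypotheses (chi_dchar : dirichlet_char N chi) (chi_prim : primitive_char N chi).

Let chiN := dirichlet_char_periodic chi_dchar.

Definition norm_char_sum (m : int) : algC :=
  \sum_(x : {ffun 'I_8 -> 'I_N}) chi (m - oform (intv x)).

Let sum_ffun8_const (a : algC) : \sum_(x : {ffun 'I_8 -> 'I_N}) a = (N ^ 8)%:R * a.
Proof. by rewrite sumr_const card_ffun !card_ord mulr_natl. Qed.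

Let N8_neq0 : (N ^ 8)%:R != 0 :> algC.
Proof. by rewrite pnatr_eq0 -lt0n expn_gt0 N_gt0. Qed.

Lemma chi_sub_oform_periodic c u w :
  chi (c - oform (vadd u (vscale N%:Z w))) = chi (c - oform u).
Proof. by rewrite oform_vadd_vscale opprD addrA -mulrN chiN. Qed.

Lemma norm_char_sum_propto_chi s0 s1 s2 s3 : N%:Z = sum4sq s0 s1 s2 s3 ->
  exists k : nat, forall m, norm_char_sum m = k%:R * chi m.
Proof.
move=> Ns.
pose P := [pred x : {ffun 'I_8 -> 'I_N} |
  [forall j, (N%:Z %| qmul_adj s0 s1 s2 s3 (intv x) j)%Z]].
exists #|P| => m; apply: (mulfI N8_neq0); rewrite -sum_ffun8_const.
(* average over the translates x + y q: the quadratic part in y vanishes mod N(q) = N *)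
transitivity (\sum_(y : {ffun 'I_8 -> 'I_N}) \sum_(x : {ffun 'I_8 -> 'I_N})
   chi (m - oform (vadd (intv x) (qmul s0 s1 s2 s3 (intv y))))).
  by apply: eq_bigr => y _; apply: (sum_ffun_translate N_gt0 _ (chi_sub_oform_periodic m)).
transitivity (\sum_(x : {ffun 'I_8 -> 'I_N}) \sum_(y : {ffun 'I_8 -> 'I_N})
   chi ((m - oform (intv x)) - dot (qmul_adj s0 s1 s2 s3 (intv x)) (intv y))).
  rewrite exchange_big; apply: eq_bigr => x _; apply: eq_bigr => y _.
  rewrite oform_vadd_qmul -Ns -[RHS](chiN _ (- oform (intv y))).
  by congr chi; ring.
transitivity (\sum_(x in P) (N ^ 8)%:R * chi m); last first.
  by rewrite sumr_const -mulrnAr -[chi m *+ _]mulr_natl.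
rewrite [RHS]big_mkcond; apply: eq_bigr => x _.
rewrite char_sum_dot // inE; case: ifP => [/forallP/(oform_dvd_qmul_adj Ns)/dvdzP[q ->]|//].
by rewrite -(chiN m (- q)); congr (_ * chi _); ring.
Qed.

Let oform_diff_sum := \sum_(x : {ffun 'I_8 -> 'I_N}) \sum_(y : {ffun 'I_8 -> 'I_N})
  chi (1 - oform (intv x) + oform (intv y)).

Lemma oform_diff_sum_sq k : (forall m, norm_char_sum m = k%:R * chi m) ->
  oform_diff_sum = k%:R ^+ 2.
Proof.
have [chi1 chiM _ _] := chi_dchar; move=> Fk.
have chiN1_sq : chi (-1) * chi (-1) = 1 by rewrite -chiM mulrNN mulr1 chi1.
transitivity (\sum_(y : {ffun 'I_8 -> 'I_N}) k%:R * (chi (-1) * chi (- 1 - oform (intv y)))).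
  rewrite /oform_diff_sum exchange_big; apply: eq_bigr => y _.
  rewrite -chiM -Fk; apply: eq_bigr => x _.
  by congr chi; ring.
by rewrite -!mulr_sumr -/(norm_char_sum _) Fk -[RHS]mulr1 -chiN1_sq; ring.
Qed.

Lemma oform_diff_sum_card : oform_diff_sum = (N ^ 8)%:R.
Proof.
apply: (mulfI N8_neq0); rewrite -sum_ffun8_const.
(* translate x and y by the same z: the difference of norms becomes linear in z *)
transitivity (\sum_(z : {ffun 'I_8 -> 'I_N}) \sum_(x : {ffun 'I_8 -> 'I_N})
  \sum_(y : {ffun 'I_8 -> 'I_N})
    chi (1 - oform (vadd (intv x) (intv z)) + oform (vadd (intv y) (intv z)))).
  apply: eq_bigr => z _.
  apply: etrans (sum_ffun_translate N_gt0 (intv z) (f := fun u =>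
    \sum_(y : {ffun 'I_8 -> 'I_N}) chi (1 - oform u + oform (intv y))) _) _.
    move=> u w /=; apply: eq_bigr => y _; rewrite oform_vadd_vscale.
    by rewrite -[RHS](chiN _ (- (dot (ogram u) w + N%:Z * oform w))); congr chi; ring.
  apply: eq_bigr => x _.
  apply: (sum_ffun_translate N_gt0 (intv z) (f := fun u => chi (1 - _ + oform u))) => u w.
  by rewrite oform_vadd_vscale addrA chiN.
transitivity (\sum_(x : {ffun 'I_8 -> 'I_N}) \sum_(y : {ffun 'I_8 -> 'I_N})
  \sum_(z : {ffun 'I_8 -> 'I_N}) chi ((1 - oform (intv x) + oform (intv y))
                                  - dot (ogram (vsub (intv x) (intv y))) (intv z))).
  rewrite exchange_big; apply: eq_bigr => x _; rewrite exchange_big.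
  apply: eq_bigr => y _; apply: eq_bigr => z _; congr chi.
  by have := oform_vadd_subr (intv x) (intv y) (intv z); lia.
rewrite -[RHS]sum_ffun8_const; apply: eq_bigr => x _.
rewrite (bigD1 x) //= [X in _ + X]big1 => [|y yx]; rewrite char_sum_dot //.
  rewrite (_ : vsub _ _ = fun=> 0); last first.
    by apply: functional_extensionality => i; rewrite /vsub subrr.
  rewrite ogram0 (_ : [forall j, _] = true); last by apply/forallP => j; rewrite dvdz0.
  by case: chi_dchar => chi1 _ _ _; rewrite subrK chi1 mulr1 addr0.
by case: ifP => // /forallP/ogram_dvd_inj yx'; rewrite yx' eqxx in yx.
Qed.

Lemma norm_char_sum_chi m : norm_char_sum m = (N ^ 4)%:R * chi m.
Proof.
have [s0 [s1 [s2 [s3 Ns]]]] := nat_sum4sq N.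
have [k Fk] := norm_char_sum_propto_chi Ns.
suff k_eq : k = (N ^ 4)%N by rewrite Fk k_eq.
apply/eqP; rewrite -(eqn_exp2r _ _ (isT : 0 < 2)%N) -expnM -(eqr_nat algC) natrX.
by rewrite -oform_diff_sum_sq // oform_diff_sum_card.
Qed.

End NormCharSum.

Theorem lemma4p9 (N : nat) (chi eta : int -> algC) :
  (0 < N)%N ->
  dirichlet_char N chi -> dirichlet_char N eta -> primitive_char N chi ->
  J_J2 N chi eta = (N ^ 4)%:R * J3 N chi chi eta.
Proof.
move=> N_gt0 chi_dchar eta_dchar chi_prim; have [_ chiM _ _] := chi_dchar.
rewrite /J_J2 /J3 mulr_sumr; apply: eq_bigr => a _; rewrite mulr_sumr; apply: eq_bigr => b _.
transitivity (norm_char_sum N chi (a%:Z * b%:Z) * eta (1 - (a%:Z + b%:Z))).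
  by rewrite mulr_suml; apply: eq_bigr => c _; rewrite /J2_det numq_octN_oelt.
rewrite norm_char_sum_chi // (eq_bigl _ _ (ord_sum3_eq1 N_gt0 a b)) big_pred1_eq ord_modzE.
by rewrite (modz_periodic (dirichlet_char_periodic eta_dchar)) chiM; ring.
Qed.
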